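(* Let $m\ge 4$ be an integer. For every $f:\{0,1\}^N\to\{0,1\}$, $$C^{*,\oplus}(f\circ\mathrm{IND}_m^N)\ge \tfrac12\, C^{dt}(f)\log_2 m.$$ Furthermore, for every relation $R\subseteq\{0,1\}^N\times W$, $$C^{*,\oplus}(R\circ\mathrm{IND}_m^N)\ge\tfrac12\,C^{dt}(R)\log_2 m.$$
   Context: $\mathrm{IND}_m:[m]\times\{0,1\}^m\to\{0,1\}$, $\mathrm{IND}_m(x,y)=y_x$; $\mathrm{IND}_m^N(x,y)=(\mathrm{IND}_m(x_i,y_i))_{i\in[N]}$ for $x\in[m]^N$ (Alice's input) and $y\in(\{0,1\}^m)^N$ (Bob's input, viewed as a vector in $\mathbb{F}_2^{[N]\times[m]}$). The lifted function is $(f\circ\mathrm{IND}_m^N)(x,y)=f(\mathrm{IND}_m^N(x,y))$; the lifted relation $R\circ\mathrm{IND}_m^N$ relates $(x,y)$ to $w$ iff $(\mathrm{IND}_m^N(x,y),w)\in R$. A $( *,\oplus)$-protocol (semi-structured protocol) is a deterministic two-party communication protocol in which Alice may send arbitrary functions of her input (and the transcript so far) but each bit Bob sends is a parity $\bigoplus_{(i,j)\in S}y_{i,j}$ of his input bits, with $S$ depending on the transcript so far. $C^{*,\oplus}(F)$ is the minimum worst-case number of bits communicated by a $( *,\oplus)$-protocol computing $F$; for a relation, the protocol on input $(x,y)$ must output some $w$ related to $(x,y)$ (or $\bot$ if none exists). $C^{dt}(f)$ (resp. $C^{dt}(R)$) is the minimum height of a decision tree querying bits of $z\in\{0,1\}^N$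 that computes $f$ (resp. outputs some $w$ with $(z,w)\in R$, or $\bot$ if no such $w$ exists). *)

From Stdlib Require Import Reals.
From mathcomp Require Import all_boot.
Set Implicit Arguments. Unset Strict Implicit. Unset Printing Implicit Defensive.

Definition Ain (N m : nat) := {ffun 'I_N -> 'I_m}.
Definition Bin (N m : nat) := {ffun 'I_N -> {ffun 'I_m -> bool}}.
Definition Zin (N : nat) := {ffun 'I_N -> bool}.

Definition INDN (N m : nat) (x : Ain N m) (y : Bin N m) : Zin N :=
  [ffun i => y i (x i)].

Definition parity (N m : nat) (S : {set 'I_N * 'I_m}) (y : Bin N m) : bool :=
  \big[addb/false]_(p in S) y p.1 p.2.

Inductive dtree (N : nat) (O : Type) : Type :=
| DLeaf of O
| DQuery of 'I_N & dtree N O & dtree N O.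

Fixpoint dt_eval N O (T : dtree N O) (z : Zin N) : O :=
  match T with
  | DLeaf o => o
  | DQuery i T0 T1 => if z i then dt_eval T1 z else dt_eval T0 z
  end.

Fixpoint dt_queries N O (T : dtree N O) (z : Zin N) : nat :=
  match T with
  | DLeaf _ => 0
  | DQuery i T0 T1 => (if z i then dt_queries T1 z else dt_queries T0 z).+1
  end.

Definition dt_cost N O (T : dtree N O) : nat := \max_(z : Zin N) dt_queries T z.

(* Transcript dependence is encoded by the position in the protocol tree.   *)
Inductive xprot (N m : nat) (O : Type) : Type :=
| PLeaf of O
| PAlice of (Ain N m -> bool) & xprot N m O & xprot N m O
| PBob of {set 'I_N * 'I_m} & xprot N m O & xprot N m O.

Fixpoint xp_eval N m O (P : xprot N m O) (x : Ain N m) (y : Bin N m) : O :=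
  match P with
  | PLeaf o => o
  | PAlice a P0 P1 => if a x then xp_eval P1 x y else xp_eval P0 x y
  | PBob Sb P0 P1 => if parity Sb y then xp_eval P1 x y else xp_eval P0 x y
  end.

Fixpoint xp_bits N m O (P : xprot N m O) (x : Ain N m) (y : Bin N m) : nat :=
  match P with
  | PLeaf _ => 0
  | PAlice a P0 P1 => (if a x then xp_bits P1 x y else xp_bits P0 x y).+1
  | PBob Sb P0 P1 => (if parity Sb y then xp_bits P1 x y else xp_bits P0 x y).+1
  end.

Definition xp_cost N m O (P : xprot N m O) : nat :=
  \max_(x : Ain N m) \max_(y : Bin N m) xp_bits P x y.

(* An output in option W (None = ⊥) is correct for R on z. *)
Definition rel_ok (N : nat) (W : Type) (R : Zin N -> W -> Prop) (z : Zin N)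
  (o : option W) : Prop :=
  match o with
  | Some w => R z w
  | None => forall w, ~ R z w
  end.

Definition dt_computes_fun N (f : Zin N -> bool) (T : dtree N bool) : Prop :=
  forall z, dt_eval T z = f z.

Definition dt_computes_rel N W (R : Zin N -> W -> Prop) (T : dtree N (option W)) : Prop :=
  forall z, rel_ok R z (dt_eval T z).

Definition xp_computes_lifted_fun N m (f : Zin N -> bool) (P : xprot N m bool) : Prop :=
  forall x y, xp_eval P x y = f (INDN x y).

Definition xp_computes_lifted_rel N m W (R : Zin N -> W -> Prop)
  (P : xprot N m (option W)) : Prop :=
  forall x y, rel_ok R (INDN x y) (xp_eval P x y).

(* C^dt(f) = min depth: we express "c >= 1/2 C^dt log2 m" as
   "c >= 1/2 h log2 m for every h that lower-bounds the cost of every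
   decision tree computing f" (equivalently, for h = the minimum). *)
Definition dt_fun_lb N (f : Zin N -> bool) (h : nat) : Prop :=
  forall T : dtree N bool, dt_computes_fun f T -> h <= dt_cost T.

Definition dt_rel_lb N W (R : Zin N -> W -> Prop) (h : nat) : Prop :=
  forall T : dtree N (option W), dt_computes_rel R T -> h <= dt_cost T.

Definition log2R (x : R) : R := Rdiv (ln x) (ln (IZR 2)).

From Stdlib Require Import Reals Lra.
From mathcomp Require Import all_boot zify.
Set Implicit Arguments. Unset Strict Implicit. Unset Printing Implicit Defensive.

(* A protocol is simulated by a decision tree that maintains a set X of
   Alice inputs, a set Fr of free coordinates (every other coordinate k has
   pointer x_k = s_k on X and pointed bit a_k), and an affine substitution sg
   restricting Bob's input.  An Alice bit keeps the larger half of X.  A Bob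
   parity is an affine function of the unpinned bits of Bob's input: it is
   either constant or flipped by some unpinned bit (i, j).  If most of X
   points away from (i, j) at i, pinning that bit makes the parity 0;
   otherwise we keep x_i = j, query z_i and pin y_(i,j) := z_i.  This yields
   the potential bound |X| m^q <= 2^(c + q) m^|Fr| after c bits and q
   queries; starting from |X| = m^N and |Fr| = N it gives m^q <= 2^(c + q),
   i.e. m^q <= 4^c when m >= 4. *)

Lemma half_cardsID (T : finType) (A X : {set T}) :
  #|X| <= 2 * #|X :&: A| \/ #|X| <= 2 * #|X :\: A|.
Proof. have := cardsID A X; lia. Qed.

Section BobInputs.
Variables N m : nat.
Implicit Types (y : Bin N m) (p : 'I_N * 'I_m) (h : Bin N m -> bool).

Definition bzero : Bin N m := [ffun _ => [ffun _ => false]].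
Definition bxor y1 y2 : Bin N m := [ffun k => [ffun j => y1 k j (+) y2 k j]].
Definition bdelta p : Bin N m := [ffun k => [ffun j => (k, j) == p]].
Definition bset y p c : Bin N m :=
  [ffun k => [ffun j => if (k, j) == p then c else y k j]].

Definition affine h := forall y1 y2 y3, h (bxor (bxor y1 y2) y3) = h y1 (+) h y2 (+) h y3.

Lemma affine_parity S : affine (parity S).
Proof.
move=> y1 y2 y3; rewrite /parity.
under eq_bigr => p _ do rewrite !ffunE.
by rewrite !big_split.
Qed.

Lemma bsetE y p c : bset y p c = if y p.1 p.2 == c then y else bxor y (bdelta p).
Proof.
case: p => i j0 /=; apply/ffunP => k; apply/ffunP => j.
case: ifP => [/eqP yc | /negbT yc]; rewrite !ffunE; case: eqP => [[-> ->]|]; rewrite ?addbF //.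
by rewrite addbT; move: yc; case: c; case: (y i j0).
Qed.

Lemma affine_flip h p y : affine h ->
  h (bxor y (bdelta p)) = h y (+) h (bdelta p) (+) h bzero.
Proof.
move=> ha; rewrite -ha; congr h.
by apply/ffunP => k; apply/ffunP => j; rewrite !ffunE addbF.
Qed.

Lemma affine_const h : affine h ->
  (forall p, h (bdelta p) = h bzero) -> forall y, h y = h bzero.
Proof.
move=> ha hdelta y.
have hset y' p c : h (bset y' p c) = h y'.
  by rewrite bsetE; case: eqP => // _; rewrite affine_flip // hdelta addbK.
pose clear := foldr (fun p y' => bset y' p false) y.
have clearE s k j : clear s k j = ((k, j) \notin s) && y k j.
  elim: s => [|p s IH] //=; rewrite !ffunE in_cons IH.
  by case: eqP.
have <- : clear (enum [set: 'I_N * 'I_m]) = bzero.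
  by apply/ffunP => k; apply/ffunP => j; rewrite clearE mem_enum inE !ffunE.
by elim: (enum _) => [|p s IH] //=; rewrite hset.
Qed.

Lemma affine_constP h : affine h ->
  (forall y, h y = h bzero) \/ exists p, forall y, h (bxor y (bdelta p)) = ~~ h y.
Proof.
move=> ha; case: (pickP (fun p => h (bdelta p) != h bzero)) => [p hp | hno].
  right; exists p => y; rewrite affine_flip //.
  by move: hp; case: (h (bdelta p)); case: (h bzero); case: (h y).
by left; apply: affine_const => // p; apply/eqP/negbFE/hno.
Qed.

Definition pivot h p y := if h y then bxor y (bdelta p) else y.

Lemma pivot_flip h p : (forall y, h (bxor y (bdelta p)) = ~~ h y) ->
  forall y, h (pivot h p y) = false.
Proof.
by move=> hflip y; rewrite /pivot; case: ifP => [hy|/negbT/negbTE //]; rewrite hflip hy.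
Qed.

End BobInputs.
Arguments bzero {N m}.

Section SimulationState.
Variables N m : nat.
Implicit Types (Fr : {set 'I_N}) (s : 'I_N -> 'I_m) (a : 'I_N -> bool)
  (X : {set Ain N m}) (NP : {set 'I_N * 'I_m}) (sg : Bin N m -> Bin N m) (y : Bin N m).

(* Positions of Bob's input outside NP are pinned: sg is the identity on NP
   and fills in the pinned positions from the bits in NP, so the image of sg
   is the affine subspace of Bob inputs that are still possible. *)
Record sim_state Fr s a X NP sg : Prop := SimState {
  fixed_ptr : forall x, x \in X -> forall k, k \notin Fr -> x k = s k;
  free_ptr_unpinned : forall x, x \in X -> forall k, k \in Fr -> (k, x k) \in NP;
  sg_unpinned : forall y q, q \in NP -> sg y q.1 q.2 = y q.1 q.2;
  sg_depends_unpinned : forall y1 y2,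
    {in NP, forall q, y1 q.1 q.2 = y2 q.1 q.2} -> sg y1 = sg y2;
  sg_fixed_bit : forall y k, k \notin Fr -> sg y k (s k) = a k;
  sg_affine : forall y1 y2 y3,
    sg (bxor (bxor y1 y2) y3) = bxor (bxor (sg y1) (sg y2)) (sg y3) }.

Lemma sim_state_full (j0 : 'I_m) :
  sim_state [set: 'I_N] (fun _ => j0) (fun _ => false) [set: Ain N m] [set: 'I_N * 'I_m] id.
Proof.
split=> //.
- by move=> x _ k; rewrite in_setT.
- by move=> x _ k _; rewrite in_setT.
- move=> y1 y2 agree; apply/ffunP => k; apply/ffunP => j.
  by apply: (agree (k, j)); rewrite in_setT.
- by move=> y k; rewrite in_setT.
Qed.

Variables (Fr : {set 'I_N}) (s : 'I_N -> 'I_m) (a : 'I_N -> bool)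
  (X : {set Ain N m}) (NP : {set 'I_N * 'I_m}) (sg : Bin N m -> Bin N m).
Hypothesis st : sim_state Fr s a X NP sg.

Lemma sim_state_sub X' : X' \subset X -> sim_state Fr s a X' NP sg.
Proof.
move/subsetP=> sub; case: st => hA hB *; split=> // x /sub; [exact: hA | exact: hB].
Qed.

Lemma card_sim_state : #|X| <= m ^ #|Fr|.
Proof.
pose restr (x : Ain N m) := [ffun i : 'I_#|Fr| => x (enum_val i)].
have restr_inj : {in X &, injective restr}.
  move=> x1 x2 x1X x2X /ffunP eq12; apply/ffunP => k.
  have [kF|kF] := boolP (k \in Fr); last by rewrite !(fixed_ptr st).
  by have := eq12 (enum_rank_in kF k); rewrite !ffunE enum_rankK_in.
rewrite -(card_in_imset restr_inj); apply: leq_trans (max_card _) _.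
by rewrite card_ffun !card_ord.
Qed.

Lemma affine_comp_sg g : affine g -> affine (fun y => g (sg y)).
Proof. by move=> ga y1 y2 y3; rewrite (sg_affine st) ga. Qed.

Lemma unpinned_of_flip g p : (forall y, g (sg (bxor y (bdelta p))) = ~~ g (sg y)) ->
  p \in NP.
Proof.
move=> hflip; apply/negPn/negP => pN; have := hflip bzero.
rewrite (sg_depends_unpinned st (y1 := bxor _ _) (y2 := bzero)); first by case: (g _).
move=> q qN; rewrite !ffunE; case: eqP => [eq_qp|]; last by rewrite addbF.
by rewrite -eq_qp in pN; case: q qN pN eq_qp => ? ? /= ->.
Qed.

Lemma free_of_unpinned_ptr x i : x \in X -> (i, x i) \in NP -> i \in Fr.
Proof.
move=> xX iN; apply/negPn/negP => iF.
have := sg_fixed_bit st (bdelta (i, x i)) iF; rewrite -(sg_fixed_bit st bzero iF).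
by rewrite -(fixed_ptr st xX iF) !(sg_unpinned st _ iN) /= !ffunE eqxx.
Qed.

Lemma pivotE h p y q : pivot h p y q.1 q.2 = y q.1 q.2 (+) (q == p) && h y.
Proof. by rewrite /pivot; case: (h y); rewrite ?ffunE ?andbT ?andbF ?addbF //; case: q. Qed.

Lemma sim_state_pivot g i j : affine (fun y => g (sg y)) ->
  (forall y, g (sg (bxor y (bdelta (i, j)))) = ~~ g (sg y)) ->
  sim_state Fr s a (X :\: [set x : Ain N m | x i == j]) (NP :\ (i, j))
    (fun y => sg (pivot (fun y' => g (sg y')) (i, j) y)).
Proof.
set h := fun y => g (sg y) => ha hflip.
have pN : (i, j) \in NP := unpinned_of_flip hflip.
split.
- by move=> x /setDP[xX _]; apply: (fixed_ptr st).
- move=> x /setDP[xX]; rewrite inE => xij k kF.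
  rewrite !inE (free_ptr_unpinned st) // andbT.
  by apply: contra xij => /eqP[-> ->].
- move=> y q /setD1P[qp qN].
  by rewrite (sg_unpinned st _ qN) pivotE (negbTE qp) addbF.
- move=> y1 y2 agree; apply: (sg_depends_unpinned st) => q qN.
  rewrite !pivotE; case: (eqVneq q (i, j)) => [-> | qp]; last first.
    by rewrite !andFb !addbF; apply: agree; rewrite !inE qp.
  (* The pinned bit y_(i,j) (+) h y is determined by the bits in NP :\ (i, j). *)
  have h_agree : h y1 = h (bset y2 (i, j) (y1 i j)).
    congr g; apply: (sg_depends_unpinned st) => q' q'N; rewrite !ffunE.
    case: eqP => [[-> ->] //|q'p]; apply: agree.
    by rewrite !inE q'N andbT; apply/eqP; case: q' q'N q'p.
  move: h_agree; rewrite bsetE /=; case: eqP => [-> -> //|].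
  rewrite /h hflip => ne ->.
  by move: ne; case: (y1 i j); case: (y2 i j); case: (g (sg y2)).
- by move=> y k kF; apply: (sg_fixed_bit st).
- move=> y1 y2 y3; rewrite -(sg_affine st); congr sg.
  apply/ffunP => k; apply/ffunP => j'; rewrite !ffunE !(pivotE _ _ _ (k, j')) /= !ffunE ha.
  by case: (_ == _); case: (y1 k j'); case: (y2 k j'); case: (y3 k j');
    case: (h y1); case: (h y2); case: (h y3).
Qed.

Lemma sim_state_fix i j c : (i, j) \in NP ->
  sim_state (Fr :\ i) (fun k => if k == i then j else s k)
    (fun k => if k == i then c else a k)
    (X :&: [set x : Ain N m | x i == j]) (NP :\ (i, j)) (fun y => sg (bset y (i, j) c)).
Proof.
move=> pN; split.
- move=> x /setIP[xX]; rewrite inE => /eqP xij k; rewrite !inE negb_and negbK.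
  by case: eqP => [-> //|_ /= kF]; apply: (fixed_ptr st).
- move=> x /setIP[xX _] k /setD1P[ki kF].
  by rewrite !inE (free_ptr_unpinned st) // andbT; apply: contra ki => /eqP[->].
- move=> y q /setD1P[qp qN].
  by rewrite (sg_unpinned st _ qN) !ffunE; case: q qp qN => k j' /negbTE /= ->.
- move=> y1 y2 agree; apply: (sg_depends_unpinned st) => -[k j'] qN /=.
  rewrite !ffunE; case: eqP => // qp.
  by apply: (agree (k, j')); rewrite !inE qN andbT; apply/eqP.
- move=> y k; rewrite !inE negb_and negbK.
  case: eqP => [-> _|_ /= kF]; last exact: (sg_fixed_bit st).
  by rewrite (sg_unpinned st _ pN) /= !ffunE eqxx.
- move=> y1 y2 y3; rewrite -(sg_affine st); congr sg.
  apply/ffunP => k; apply/ffunP => j'; rewrite !ffunE.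
  by case: (_ == _); rewrite ?addbb.
Qed.

End SimulationState.

Lemma xp_bits_le_cost N m O (P : xprot N m O) x y : xp_bits P x y <= xp_cost P.
Proof. by apply: (bigmax_sup x) => //; apply: (bigmax_sup y). Qed.

Lemma leq_expn4_of_expn2 m q c : 4 <= m -> m ^ q <= 2 ^ (c + q) -> m ^ q <= 4 ^ c.
Proof.
move=> hm hq; have m0 : 0 < m ^ q by rewrite expn_gt0; lia.
rewrite -(leq_pmul2r m0); apply: leq_trans (leq_mul hq hq) _.
rewrite -expnMn expnD leq_pmul2l ?expn_gt0 //.
by case: q {hq m0} => // q; rewrite leq_exp2r.
Qed.

Lemma leq_halving A A' M B : A <= 2 * A' -> A' * M <= B -> A * M <= 2 * B.
Proof.
move=> hA hB; apply: leq_trans (leq_mul hA (leqnn M)) _.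
by rewrite -mulnA leq_mul2l hB orbT.
Qed.

Section Simulation.
Variables (N m : nat) (O : Type) (ok : Zin N -> O -> Prop).
Implicit Types (P : xprot N m O) (T : dtree N O) (Fr : {set 'I_N}) (a : 'I_N -> bool)
  (X : {set Ain N m}) (sg : Bin N m -> Bin N m).

Definition correct_on P X sg :=
  forall x y, x \in X -> ok (INDN x (sg y)) (xp_eval P x (sg y)).

Definition simulates P Fr a X sg T :=
  forall z : Zin N, (forall k, k \notin Fr -> z k = a k) ->
    ok z (dt_eval T z) /\ exists x y, x \in X /\
      #|X| * m ^ dt_queries T z <= 2 ^ (xp_bits P x (sg y) + dt_queries T z) * m ^ #|Fr|.

Definition simulable P := forall Fr s a X NP sg,
  sim_state Fr s a X NP sg -> 0 < #|X| -> correct_on P X sg ->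
  exists T, simulates P Fr a X sg T.

Definition descends_to P P' X sg := forall x y, x \in X ->
  xp_eval P x (sg y) = xp_eval P' x (sg y) /\ xp_bits P x (sg y) = (xp_bits P' x (sg y)).+1.

Lemma simulates_comp P Fr a X sg tau T :
  simulates P Fr a X (fun y => sg (tau y)) T -> simulates P Fr a X sg T.
Proof.
by move=> hT z hz; have [okz [x [y [xX hb]]]] := hT z hz; split=> //; exists x, (tau y).
Qed.

Lemma simulates_step P P' Fr a X X' sg T :
  X' \subset X -> #|X| <= 2 * #|X'| -> descends_to P P' X' sg ->
  simulates P' Fr a X' sg T -> simulates P Fr a X sg T.
Proof.
move=> /subsetP sub hhalf hdesc hT z hz; have [okz [x [y [xX' hb]]]] := hT z hz.
split=> //; exists x, y; split; first exact: sub.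
by have [_ ->] := hdesc x y xX'; rewrite addSn expnS -mulnA; apply: leq_halving hhalf hb.
Qed.

Lemma simulates_query P Fr a X sg i j (T : bool -> dtree N O) :
  i \in Fr -> #|X| <= 2 * #|X :&: [set x : Ain N m | x i == j]| ->
  (forall c, simulates P (Fr :\ i) (fun k => if k == i then c else a k)
     (X :&: [set x : Ain N m | x i == j]) (fun y => sg (bset y (i, j) c)) (T c)) ->
  simulates P Fr a X sg (DQuery i (T false) (T true)).
Proof.
move=> iF hhalf hT z hz.
have hz' k : k \notin Fr :\ i -> z k = (if k == i then z i else a k).
  by rewrite !inE negb_and negbK; case: eqP => [-> //|_ /= kF]; apply: hz.
have [okz [x [y [xX' hb]]]] := hT (z i) z hz'.
have -> : dt_eval (DQuery i (T false) (T true)) z = dt_eval (T (z i)) z.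
  by rewrite /=; case: (z i).
have -> : dt_queries (DQuery i (T false) (T true)) z = (dt_queries (T (z i)) z).+1.
  by rewrite /=; case: (z i).
split=> //; exists x, (bset y (i, j) (z i)); split; first by case/setIP: xX'.
rewrite (cardsD1 i Fr) iF add1n addnS !expnS -mulnA; apply: leq_halving hhalf _.
by rewrite mulnCA [_ * (m * _)]mulnCA leq_mul2l hb orbT.
Qed.

Lemma simulable_leaf o : simulable (PLeaf _ _ o).
Proof.
move=> Fr s a X NP sg st /card_gt0P[x xX] hok; exists (DLeaf _ o) => z hz.
pose y : Bin N m := [ffun k => [ffun _ => z k]].
have ind_y : INDN x (sg y) = z.
  apply/ffunP => k; rewrite ffunE; have [kF|kF] := boolP (k \in Fr).
    by rewrite (sg_unpinned st y (free_ptr_unpinned st xX kF)) /= !ffunE.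
  by rewrite (fixed_ptr st xX kF) (sg_fixed_bit st y kF) hz.
split; first by rewrite -ind_y; apply: hok.
by exists x, y; split=> //=; rewrite muln1 mul1n; apply: card_sim_state st.
Qed.

Lemma simulable_step P P' Fr s a X X' NP sg :
  simulable P' -> sim_state Fr s a X' NP sg -> X' \subset X -> 0 < #|X| ->
  #|X| <= 2 * #|X'| -> descends_to P P' X' sg -> correct_on P X sg ->
  exists T, simulates P Fr a X sg T.
Proof.
move=> IH st' sub hX hhalf hdesc hok.
have hX' : 0 < #|X'| by move: (leq_trans hX hhalf); rewrite muln_gt0 => /andP[].
have hok' : correct_on P' X' sg.
  by move=> x y xX'; have [<- _] := hdesc x y xX'; apply: hok; apply: (subsetP sub).
have [T hT] := IH _ _ _ _ _ _ st' hX' hok'.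
by exists T; apply: simulates_step hT.
Qed.

Lemma simulable_alice f P0 P1 : simulable P0 -> simulable P1 -> simulable (PAlice f P0 P1).
Proof.
move=> IH0 IH1 Fr s a X NP sg st hX hok.
have [hhalf|hhalf] := half_cardsID [set x | f x] X.
  apply: (simulable_step IH1 (sim_state_sub st (subsetIl _ _)) (subsetIl _ _) hX hhalf _ hok).
  by move=> x y /setIP[_]; rewrite inE /= => ->.
apply: (simulable_step IH0 (sim_state_sub st (subsetDl _ _)) (subsetDl _ _) hX hhalf _ hok).
by move=> x y /setDP[_]; rewrite inE /= => /negbTE ->.
Qed.

Lemma descends_bob S P0 P1 X sg b : (forall y, parity S (sg y) = b) ->
  descends_to (PBob S P0 P1) (if b then P1 else P0) X sg.
Proof. by move=> hb x y _ /=; rewrite {}hb; case: b. Qed.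

Lemma simulable_bob S P0 P1 : simulable P0 -> simulable P1 -> simulable (PBob S P0 P1).
Proof.
move=> IH0 IH1; have IHb b : simulable (if b then P1 else P0) by case: b.
move=> Fr; have [n] := ubnP #|Fr|; elim: n Fr => // n IHn Fr hFr s a X NP sg st hX hok.
have ha := affine_comp_sg st (affine_parity S).
have [hconst|[[i j] hflip]] := affine_constP ha.
  apply: (simulable_step (IHb _) st (subxx X) hX _ (descends_bob P0 P1 hconst) hok).
  by rewrite leq_pmull.
have pN := unpinned_of_flip st hflip.
have [hhalf|hhalf] := half_cardsID [set x : Ain N m | x i == j] X.
- have hX' : 0 < #|X :&: [set x : Ain N m | x i == j]|.
    by move: (leq_trans hX hhalf); rewrite muln_gt0 => /andP[].
  have /card_gt0P[x /setIP[xX]] := hX'.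
  rewrite inE => /eqP xij.
  have iF : i \in Fr by apply: (free_of_unpinned_ptr st xX); rewrite xij.
  have hFr' : #|Fr :\ i| < n by move: hFr; rewrite (cardsD1 i Fr) iF.
  have hT c := IHn _ hFr' _ _ _ _ _ (sim_state_fix st c pN) hX'
    (fun x y xX => hok x _ (subsetP (subsetIl _ _) x xX)).
  have [T0 hT0] := hT false; have [T1 hT1] := hT true.
  exists (DQuery i T0 T1).
  by apply: (simulates_query (T := fun c => if c then T1 else T0)) iF hhalf _; case.
- set tau := pivot (fun y => parity S (sg y)) (i, j).
  have [T hT] := simulable_step (IHb false) (sim_state_pivot st ha hflip) (subsetDl _ _)
    hX hhalf (descends_bob P0 P1 (pivot_flip hflip)) (fun x y => hok x (tau y)).
  by exists T; apply: simulates_comp hT.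
Qed.

Lemma simulable_all P : simulable P.
Proof.
elim: P => [o|f P0 IH0 P1 IH1|S P0 IH0 P1 IH1].
- exact: simulable_leaf.
- exact: simulable_alice.
- exact: simulable_bob.
Qed.

End Simulation.

Lemma dtree_of_xprot N m O (ok : Zin N -> O -> Prop) (P : xprot N m O) : 4 <= m ->
  (forall x y, ok (INDN x y) (xp_eval P x y)) ->
  exists T : dtree N O, (forall z, ok z (dt_eval T z)) /\ m ^ dt_cost T <= 4 ^ xp_cost P.
Proof.
move=> hm hok; have m0 : 0 < m by lia.
have hX : 0 < #|[set: Ain N m]| by rewrite cardsT card_ffun card_ord expn_gt0 m0.
have [T hT] := simulable_all (sim_state_full N (Ordinal m0)) hX (fun x y _ => hok x y).
have hz z : forall k, k \notin [set: 'I_N] -> z k = false by move=> k; rewrite in_setT.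
exists T; split=> [z|]; first by have [] := hT z (hz z).
rewrite /dt_cost; have [|z ->] := eq_bigmax (dt_queries T).
  by apply/card_gt0P; exists [ffun=> false].
have [_ [x [y [_]]]] := hT z (hz z).
rewrite !cardsT card_ffun !card_ord mulnC leq_pmul2r ?expn_gt0 ?m0 // => hb.
apply: leq_expn4_of_expn2 hm (leq_trans hb _).
by apply: leq_pexp2l => //; rewrite leq_add2r xp_bits_le_cost.
Qed.

Section Log2Bound.
Local Open Scope R_scope.

Lemma INR_expn (a n : nat) : INR (a ^ n)%N = INR a ^ n.
Proof. by elim: n => [|n IH] //=; rewrite expnS mult_INR IH. Qed.

Lemma log2R_bound (m h c : nat) : (0 < m)%N -> (m ^ h <= 4 ^ c)%N ->
  Rge (INR c) (Rmult (Rmult (Rinv (IZR 2)) (INR h)) (log2R (INR m))).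
Proof.
move=> m0 hmc; have ln2 := ln_lt_2.
have hm : 0 < INR m by apply: lt_0_INR; apply/ltP.
have hle : INR (m ^ h)%N <= INR (2 ^ (2 * c))%N.
  by apply: le_INR; apply/leP; rewrite expnM.
rewrite !INR_expn in hle; change (INR 2) with 2 in hle.
have hln : INR h * ln (INR m) <= INR (2 * c) * ln 2.
  rewrite -!ln_pow //; last lra.
  have [hlt|->] := Rle_lt_or_eq_dec _ _ hle; last lra.
  by apply: Rlt_le; apply: ln_increasing => //; apply: pow_lt.
rewrite mult_INR /= in hln.
apply: Rle_ge; rewrite /log2R.
apply: (Rmult_le_reg_r (2 * ln 2)); first lra.
have -> : / 2 * INR h * (ln (INR m) / ln 2) * (2 * ln 2) = INR h * ln (INR m) by field; lra.
lra.
Qed.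

End Log2Bound.

Lemma xp_cost_lower_bound N m O (ok : Zin N -> O -> Prop) (P : xprot N m O) (h : nat) :
  4 <= m -> (forall x y, ok (INDN x y) (xp_eval P x y)) ->
  (forall T : dtree N O, (forall z, ok z (dt_eval T z)) -> h <= dt_cost T) ->
  Rge (INR (xp_cost P)) (Rmult (Rmult (Rinv (IZR 2)) (INR h)) (log2R (INR m))).
Proof.
move=> hm hok hlb; have [T [hT hcost]] := dtree_of_xprot hm hok.
apply: log2R_bound; first lia.
by apply: leq_trans hcost; apply: leq_pexp2l; [lia | apply: hlb].
Qed.

Theorem theorem15 (m N : nat) (hm : 4 <= m) :
  (forall (f : Zin N -> bool) (P : xprot N m bool) (h : nat),
      xp_computes_lifted_fun f P -> dt_fun_lb f h ->
      Rge (INR (xp_cost P)) (Rmult (Rmult (Rinv (IZR 2)) (INR h)) (log2R (INR m))))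
  /\
  (forall (W : Type) (R : Zin N -> W -> Prop) (P : xprot N m (option W)) (h : nat),
      xp_computes_lifted_rel R P -> dt_rel_lb R h ->
      Rge (INR (xp_cost P)) (Rmult (Rmult (Rinv (IZR 2)) (INR h)) (log2R (INR m)))).
Proof.
split=> [f P h hP hlb | W R P h hP hlb].
- exact: (xp_cost_lower_bound (ok := fun z o => o = f z) hm hP hlb).
- exact: (xp_cost_lower_bound (ok := rel_ok R) hm hP hlb).
Qed.
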